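(* Let $\mathbf{X}=\{X^n\}_{n=1}^\infty$ (null hypothesis) and $\overline{\mathbf{X}}=\{\overline{X}^n\}_{n=1}^\infty$ (alternative hypothesis) be general sources with common alphabet $\mathcal{X}$, and let $\eta$ and $B_e(r\mid\mathbf{X}\|\overline{\mathbf{X}})$ be as defined in the context. Then for every $r\ge 0$, $$B_e(r\mid\mathbf{X}\|\overline{\mathbf{X}})=\inf_{R\in\mathbb{R}}\{R+\eta(R)\mid \eta(R)<r\},$$ where the infimum of the empty set is $+\infty$; in particular $B_e(0\mid\mathbf{X}\|\overline{\mathbf{X}})=+\infty$.
   Context: A general source $\mathbf{X}=\{X^n\}_{n=1}^\infty$ is a sequence of random variables $X^n$ taking values in $\mathcal{X}^n$, where $\mathcal{X}$ is an arbitrary abstract (measurable) set; no consistency between different $n$ is assumed. $P_Z$ denotes the distribution of a random variable $Z$. For $\mathbf{x}\in\mathcal{X}^n$, $\frac{P_{X^n}(\mathbf{x})}{P_{\overline{X}^n}(\mathbf{x})}$ denotes $g_n(\mathbf{x})$, the Radon–Nikodym derivative of $P_{X^n}$ with respect to $P_{\overline{X}^n}$, with the convention that $g_n=+\infty$ on a $P_{\overline{X}^n}$-null set carrying the singular part of $P_{X^n}$; $\frac{P_{X^n}(X^n)}{P_{\overline{X}^n}(X^n)}:=g_n(X^n)$. Logarithms are natural; $R+(+\infty)=+\infty$. Define $$\eta(R)=\liminf_{n\to\infty}\frac1n\log\frac{1}{\Pr\left\{\frac1n\log\frac{P_{X^n}(X^n)}{P_{\overline{X}^n}(X^n)}\le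 R\right\}}\in[0,+\infty].$$ For a measurable acceptance region $\mathcal{A}_n\subset\mathcal{X}^n$, let $\mu_n=\Pr\{X^n\notin\mathcal{A}_n\}$ (first kind error probability) and $\lambda_n=\Pr\{\overline{X}^n\in\mathcal{A}_n\}$ (second kind error probability). For $r\ge0$, a real $E$ is $r$-achievable if there exist acceptance regions $\mathcal{A}_n$ ($n=1,2,\dots$) with $\liminf_{n}\frac1n\log\frac1{\mu_n}\ge r$ and $\liminf_{n}\frac1n\log\frac1{\lambda_n}\ge E$. $B_e(r\mid\mathbf{X}\|\overline{\mathbf{X}})=\sup\{E\mid E\text{ is } r\text{-achievable}\}$. *)

From HB Require Import structures.
From mathcomp Require Import all_boot all_order all_algebra.
From mathcomp Require Import all_classical all_reals all_analysis.
From mathcomp Require Import measurable_realfun lebesgue_integral.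
Set Implicit Arguments. Unset Strict Implicit. Unset Printing Implicit Defensive.
Import Order.TTheory GRing.Theory Num.Theory.
Local Open Scope classical_set_scope.
Local Open Scope ring_scope.
Local Open Scope ereal_scope.

(* Natural logarithm on extended reals: log 0 = -oo, log (+oo) = +oo.
   (Values < 0 never occur below; they are sent to -oo.) *)
Definition elog {R : realType} (x : \bar R) : \bar R :=
  match x with
  | r%:E => if (0 < r)%R then (ln r)%:E else -oo
  | +oo => +oo
  | -oo => -oo
  end.

Definition rate {R : realType} (n : nat) (p : \bar R) : \bar R :=
  ((n%:R)^-1)%:E * - elog p.

(* g is a version of the Radon-Nikodym derivative dP/dQ on the tuple space,
   with g = +oo on a Q-null set N carrying the singular part of P:
   for every measurable A, P A = \int_{A \ N} g dQ + P (A `&` N). *)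
Definition RN_version {d} {R : realType} {T : measurableType d}
  (P Q : probability T R) (g : T -> \bar R) : Prop :=
  measurable_fun setT g /\ (forall x, 0 <= g x) /\
  exists N : set T, [/\ measurable N, Q N = 0, (forall x, N x -> g x = +oo) &
    forall A, measurable A ->
      P A = \int[Q]_(x in A `\` N) g x + P (A `&` N)].

Section hyp.
Context {d} {R : realType} {X : measurableType d}.
(* PX n, PXb n : distributions of X^n, Xbar^n on X^n = n.-tuple X *)
Variables (PX PXb : forall n, probability (n.-tuple X) R)
  (g : forall n, n.-tuple X -> \bar R).

Definition eta (Rr : R) : \bar R :=
  limn_einf (fun n => rate n
    (PX n [set x | ((n%:R)^-1)%:E * elog (g x) <= Rr%:E])).

Definition r_achievable (r E : R) : Prop :=
  exists A : forall n, set (n.-tuple X),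
    (forall n, measurable (A n)) /\
    r%:E <= limn_einf (fun n => rate n (PX n (~` A n))) /\
    E%:E <= limn_einf (fun n => rate n (PXb n (A n))).

Definition Be (r : R) : \bar R :=
  ereal_sup [set E%:E | E in [set E | r_achievable r E]].

Definition eta_inf (r : R) : \bar R :=
  ereal_inf [set Rr%:E + eta Rr | Rr in [set Rr | eta Rr < r%:E]].
End hyp.

From Pilot Require Import Defs.
From HB Require Import structures.
From mathcomp Require Import all_boot all_order all_algebra.
From mathcomp Require Import all_classical all_reals all_analysis.
From mathcomp Require Import measurable_realfun lebesgue_integral.
From mathcomp Require Import ring lra.
Import Order.TTheory GRing.Theory Num.Theory.
Local Open Scope classical_set_scope.
Local Open Scope ring_scope.
Local Open Scope ereal_scope.

(* Write S_n(t) for the event (1/n) log g_n <= t, so that eta(t) is the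
   exponent of P(X^n in S_n(t)), and recall that Q <= e^{-nt} P off S_n(t)
   and P <= e^{nt} Q on S_n(t).
   Converse: for any test A_n, P(S_n(t)) <= e^{nt} Q(A_n) + P(A_n^c), so if
   eta(t) < r then the second-kind exponent E satisfies E <= t + eta(t).
   Direct: for E below the infimum pick E1 in between and reject on S_n(T)
   with T = E1 - r.  The first-kind exponent is eta(T) >= r, and t + eta(t)
   >= E1 for every t >= T.  Cutting the acceptance region S_n(T)^c into the
   slices S_n(t + s) \ S_n(t) of a finite grid t = T, T + s, ..., each slice
   has Q-probability at most e^{-nt} P(S_n(t + s)), which is about
   e^{-n(E1 - s)}. *)

Section limn_einf_near.
Context {R : realType}.
Implicit Types (u : (\bar R)^nat) (a : \bar R).

Lemma limn_einfE u : limn_einf u = ereal_sup (range (einfs u)).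
Proof. by rewrite limn_einf_lim; apply/cvg_lim => //; exact: cvg_einfs_sup. Qed.

Lemma limn_einf_ge_near {u a} :
  (\forall n \near \oo, a <= u n) -> a <= limn_einf u.
Proof.
rewrite limn_einfE => -[N _ aleu]; apply: le_ereal_sup_tmp.
exists (einfs u N); first by exists N.
by apply: le_ereal_inf_tmp => _ [m /= Nm <-]; exact: aleu.
Qed.

Lemma limn_einf_gt_near {u a} : a < limn_einf u -> \forall n \near \oo, a < u n.
Proof.
rewrite limn_einfE => /ereal_sup_gt [_ [N _ <-]] altN.
exists N => // n /= Nn; apply: (lt_le_trans altN).
by apply: ereal_inf_lbound; exists n.
Qed.

End limn_einf_near.

Lemma ereal_between_real {R : realType} {x y : \bar R} :
  x < y -> exists r : R, x < r%:E < y.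
Proof.
case: x => [x||]; case: y => [y||] //= xy.
- by exists ((x + y) / 2)%R; rewrite !lte_fin in xy *; apply/andP; split; lra.
- by exists (x + 1)%R; rewrite lte_fin ltry andbT; lra.
- by exists (y - 1)%R; rewrite ltNyr lte_fin; lra.
- by exists 0%R; rewrite ltNyr ltry.
Qed.

Lemma near_expRN_le1 {R : realType} (M x : R) : (0 < x)%R ->
  \forall n \near \oo, (M * expR (- (n%:R * x)) <= 1)%R.
Proof.
move=> x0; near=> n.
have Mxn : (M / x < n%:R)%R by near: n; exact: nbhs_infty_gtr.
rewrite expRN ler_pdivrMr ?expR_gt0 // mul1r.
apply: (le_trans _ (expR_ge1Dx _)).
rewrite ltr_pdivrMr // in Mxn; lra.
Unshelve. all: by end_near. Qed.

Section rate.
Context {R : realType}.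
Implicit Types (n : nat) (x p : \bar R) (t c : R).

Lemma scaled_elog_leE n x t : (0 < n)%N -> 0 <= x ->
  ((n%:R^-1)%:E * elog x <= t%:E) = (x <= (expR (n%:R * t))%:E).
Proof.
move=> n0; have n0R : (0 < n%:R :> R)%R by rewrite ltr0n.
case: x => [x||] //= x0; rewrite /elog.
  case: ifPn => xpos.
    by rewrite -EFinM !lee_fin ler_pdivrMl // -ler_expR lnK.
  rewrite mulrNy sgrV gtr0_sg // mul1e leNye; apply/esym.
  by rewrite lee_fin (le_trans _ (ltW (expR_gt0 _))) // leNgt.
by rewrite mulry sgrV gtr0_sg // mul1e !leNgt !ltey.
Qed.

Lemma rate_ge_of_le_expR {n p c} : (0 < n)%N ->
  p <= (expR (- (n%:R * c)))%:E -> c%:E <= rate n p.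
Proof.
move=> n0; have n0R : (0 < n%:R :> R)%R by rewrite ltr0n.
case: p => [p||] //=; rewrite /rate /elog; last first.
  by move=> _; rewrite /= mulry sgrV gtr0_sg // mul1e leey.
case: ifPn => [p0 pc|_ _]; last by rewrite /= mulry sgrV gtr0_sg // mul1e leey.
rewrite -EFinN -EFinM lee_fin ler_pdivlMl // lerNr.
by rewrite -(expRK (- (n%:R * c))%R) ler_ln // posrE ?expR_gt0 // -lee_fin.
Qed.

Lemma le_expR_of_rate_gt {n p c} : (0 < n)%N ->
  c%:E < rate n p -> p <= (expR (- (n%:R * c)))%:E.
Proof.
move=> n0; have n0R : (0 < n%:R :> R)%R by rewrite ltr0n.
case: p => [p||] //=; rewrite /rate /elog.
- case: ifPn => [p0|p0 _]; last first.
    by rewrite lee_fin (le_trans _ (ltW (expR_gt0 _))) // leNgt.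
  rewrite -EFinN -EFinM lte_fin ltr_pdivlMl // ltrNr => cp.
  by rewrite lee_fin -(lnK p0) ler_expR; exact: ltW.
- by rewrite /= mulrNy sgrV gtr0_sg // mul1e ltNge leNye.
- by rewrite leNye.
Qed.

Lemma rate_ge0 n p : p <= 1 -> 0 <= rate n p.
Proof.
case: n => [|n] p1; first by rewrite /rate invr0 mul0e.
by apply: rate_ge_of_le_expR; rewrite // mulr0 oppr0 expR0.
Qed.

End rate.

Section RN_version_bounds.
Context {d} {T : measurableType d} {R : realType} {P Q : probability T R}.
Context {g : T -> \bar R} {a : R} {A : set T}.
Hypotheses (Pg : RN_version P Q g) (a0 : (0 <= a)%R) (mA : measurable A).

Lemma RN_version_le : (forall x, A x -> g x <= a%:E) -> P A <= a%:E * Q A.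
Proof.
have [mg [g0 [N [mN QN gN PA]]]] := Pg; move=> ga.
have mAN : measurable (A `\` N) by exact: measurableD.
have AN0 : A `&` N = set0.
  apply/seteqP; split => // x [Ax Nx].
  by have := ga x Ax; rewrite gN // leNgt ltey.
rewrite PA // AN0 measure0 adde0.
apply: (@le_trans _ _ (\int[Q]_(x in A `\` N) (cst a%:E) x)).
  apply: ge0_le_integral => //.
  - exact: measurable_funS mg.
  - by move=> x [Ax _]; exact: ga.
rewrite integral_cst //; apply: lee_wpmul2l; first by rewrite lee_fin.
by apply: le_measure; rewrite ?inE // => x [].
Qed.

Lemma RN_version_ge : (forall x, A x -> a%:E <= g x) -> a%:E * Q A <= P A.
Proof.
have [mg [g0 [N [mN QN gN PA]]]] := Pg; move=> ag.
have mAN : measurable (A `\` N) by exact: measurableD.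
have QAN : Q A = Q (A `\` N).
  rewrite (measureDI _ mA mN) (@subset_measure0 _ _ _ _ (A `&` N) N) ?adde0 //.
  exact: measurableI.
rewrite QAN PA //; apply: (le_trans _ (leeDl _ (measure_ge0 _ _))).
rewrite -integral_cst //; apply: ge0_le_integral => //.
- exact: measurable_funS mg.
- by move=> x [Ax _]; exact: ag.
Qed.

End RN_version_bounds.

Definition decays_at_rate {R : realType} (c : R) (u : (\bar R)^nat) : Prop :=
  exists M : R, \forall n \near \oo, u n <= (M * expR (- (n%:R * c)))%:E.

Lemma decays_at_rate_liminf {R : realType} {c e : R} {u : (\bar R)^nat} :
  (e < c)%R -> decays_at_rate c u -> e%:E <= limn_einf (fun n => rate n (u n)).
Proof.
move=> ec [M uM]; apply: limn_einf_ge_near; near=> n.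
have n0 : (0 < n)%N by near: n; exact: nbhs_infty_gt.
have M1 : (M * expR (- (n%:R * (c - e))) <= 1)%R.
  by near: n; apply: near_expRN_le1; lra.
have unM : u n <= (M * expR (- (n%:R * c)))%:E by near: n; exact: uM.
apply: rate_ge_of_le_expR n0 _; apply: (le_trans unM).
rewrite lee_fin (_ : (- (n%:R * c) = - (n%:R * (c - e)) + - (n%:R * e))%R).
  by rewrite expRD mulrA ler_piMl ?expR_ge0.
by ring.
Unshelve. all: by end_near. Qed.

Section sublevels.
Context {d} {R : realType} {X : measurableType d}.
Context {PX PXb : forall n, probability (n.-tuple X) R}.
Context {g : forall n, n.-tuple X -> \bar R}.
Hypothesis RN : forall n, RN_version (PX n) (PXb n) (g n).

Definition llr_sublevel n (t : R) : set (n.-tuple X) :=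
  [set x | ((n%:R)^-1)%:E * elog (g n x) <= t%:E].

Lemma etaE t :
  Defs.eta PX g t = limn_einf (fun n => rate n (PX n (llr_sublevel n t))).
Proof. by []. Qed.

Lemma llr_sublevelE n t : (0 < n)%N ->
  llr_sublevel n t = [set x | g n x <= (expR (n%:R * t))%:E].
Proof.
have [_ [g0 _]] := RN n.
move=> n0; rewrite /llr_sublevel.
by apply/seteqP; split => x /=; rewrite scaled_elog_leE.
Qed.

Lemma measurable_llr_sublevel n t : measurable (llr_sublevel n t).
Proof.
case: n => [|n].
  have -> : llr_sublevel 0 t = [set _ | 0 <= t%:E].
    by apply/seteqP; split => x; rewrite /llr_sublevel /= invr0 mul0e.
  have [t0|t0] := boolP (0 <= t%:E).
    by rewrite (_ : [set _ | _] = setT) //; apply/seteqP; split.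
  rewrite (_ : [set _ | _] = set0) //.
  by apply/seteqP; split => x //=; rewrite (negbTE t0).
rewrite llr_sublevelE //; have [mg _] := RN n.+1.
have := measurable_lee measurableT mg (measurable_cst (expR (n.+1%:R * t))%:E).
by rewrite setTI.
Qed.

Lemma PXb_above_le {n t B} : (0 < n)%N -> measurable B ->
  B `<=` ~` llr_sublevel n t -> PXb n B <= (expR (- (n%:R * t)))%:E * PX n B.
Proof.
move=> n0 mB Bhigh.
have gB x : B x -> (expR (n%:R * t))%:E <= g n x.
  by move/Bhigh; rewrite llr_sublevelE // => /negP; rewrite -ltNge => /ltW.
have := RN_version_ge (RN n) (expR_ge0 _) mB gB.
move=> /(lee_wpmul2l (_ : 0 <= (expR (- (n%:R * t)))%:E)).
rewrite lee_fin expR_ge0.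
by rewrite muleA -EFinM -expRD addNr expR0 mul1e => /(_ isT).
Qed.

Lemma PX_below_le {n t B} : (0 < n)%N -> measurable B ->
  B `<=` llr_sublevel n t -> PX n B <= (expR (n%:R * t))%:E * PXb n B.
Proof.
move=> n0 mB Blow; apply: RN_version_le (RN n) (expR_ge0 _) mB _.
by move=> x /Blow; rewrite llr_sublevelE.
Qed.

Lemma eta_ge0 t : 0 <= Defs.eta PX g t.
Proof.
rewrite etaE; apply: limn_einf_ge_near; apply: nearW => n.
by apply: rate_ge0; apply: probability_le1; exact: measurable_llr_sublevel.
Qed.

Lemma PX_sublevel_decays {r E t c} : r_achievable PX PXb r E ->
  (c < r)%R -> (c + t < E)%R ->
  decays_at_rate c (fun n => PX n (llr_sublevel n t)).
Proof.
move=> [A [mA [muA lamA]]] cr ctE; exists 2%R.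
have muA_gt := limn_einf_gt_near (lt_le_trans (_ : c%:E < r%:E) muA).
have lamA_gt := limn_einf_gt_near (lt_le_trans (_ : (c + t)%:E < E%:E) lamA).
near=> n.
have n0 : (0 < n)%N by near: n; exact: nbhs_infty_gt.
have mS := measurable_llr_sublevel n t.
have PX_Ac : PX n (~` A n) <= (expR (- (n%:R * c)))%:E.
  by apply: le_expR_of_rate_gt n0 _; near: n; apply: muA_gt; rewrite lte_fin.
have PXb_A : PXb n (A n) <= (expR (- (n%:R * (c + t))))%:E.
  by apply: le_expR_of_rate_gt n0 _; near: n; apply: lamA_gt; rewrite lte_fin.
have -> : (2 * expR (- (n%:R * c)) =
    expR (- (n%:R * c)) + expR (n%:R * t) * expR (- (n%:R * (c + t))))%R.
  rewrite -expRD (_ : (n%:R * t + - (n%:R * (c + t)) = - (n%:R * c))%R).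
  - ring.
  - ring.
rewrite (measureDI (PX n) mS (mA n)) EFinD EFinM; apply: leeD.
  apply: le_trans PX_Ac; apply: le_measure; rewrite ?inE.
  - exact: measurableD mS (mA n).
  - exact: measurableC (mA n).
  - by move=> x [].
have mSA := measurableI _ _ mS (mA n).
apply: le_trans (PX_below_le n0 mSA (@subIsetl _ _ _)) _.
apply: lee_wpmul2l; first by rewrite lee_fin expR_ge0.
apply: le_trans PXb_A; apply: le_measure; rewrite ?inE.
- exact: mSA.
- exact: mA.
- by move=> x [].
Unshelve. all: by end_near. Qed.

Lemma r_achievable_converse {r E t} : r_achievable PX PXb r E ->
  Defs.eta PX g t < r%:E -> E%:E <= t%:E + Defs.eta PX g t.
Proof.
move=> achE eta_r; rewrite leNgt; apply/negP => eta_E.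
have eta_min : Defs.eta PX g t < (Num.min r (E - t))%:E.
  by rewrite EFin_min lt_min eta_r EFinB lteBrDl.
have [c /andP[eta_c c_min]] := ereal_between_real eta_min.
have [a /andP[eta_a a_c]] := ereal_between_real eta_c.
move: c_min a_c; rewrite !lte_fin lt_min => /andP[cr cE] ac.
have ctE : (c + t < E)%R by lra.
have := decays_at_rate_liminf ac (PX_sublevel_decays achE cr ctE).
by rewrite -etaE leNgt eta_a.
Qed.

Lemma PXb_above_decays_large t c : (c <= t)%R ->
  decays_at_rate c (fun n => PXb n (~` llr_sublevel n t)).
Proof.
move=> ct; exists 1%R; near=> n.
have n0 : (0 < n)%N by near: n; exact: nbhs_infty_gt.
have mSc := measurableC (measurable_llr_sublevel n t).
apply: le_trans (PXb_above_le n0 mSc (@subset_refl _ _)) _.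
apply: (@le_trans _ _ ((expR (- (n%:R * t)))%:E * 1)).
  by apply: lee_wpmul2l; [rewrite lee_fin expR_ge0 | exact: probability_le1].
by rewrite mule1 mul1r lee_fin ler_expR lerN2 ler_wpM2l.
Unshelve. all: by end_near. Qed.

Lemma PXb_above_decays_step t s c : (0 <= s)%R ->
  (c - t)%:E < Defs.eta PX g (t + s) ->
  decays_at_rate c (fun n => PXb n (~` llr_sublevel n (t + s))) ->
  decays_at_rate c (fun n => PXb n (~` llr_sublevel n t)).
Proof.
move=> s0 eta_ts [M decM]; exists (M + 1)%R.
have PX_small := limn_einf_gt_near eta_ts.
near=> n.
have n0 : (0 < n)%N by near: n; exact: nbhs_infty_gt.
have mS u : measurable (llr_sublevel n u) by exact: measurable_llr_sublevel.
have PX_ts : PX n (llr_sublevel n (t + s)) <= (expR (- (n%:R * (c - t))))%:E.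
  by apply: le_expR_of_rate_gt n0 _; near: n; exact: PX_small.
rewrite (measureDI (PXb n) (measurableC (mS t)) (mS (t + s)%R)).
rewrite mulrDl mul1r EFinD; apply: leeD.
  apply: (@le_trans _ _ (PXb n (~` llr_sublevel n (t + s)))); last first.
    by near: n; exact: decM.
  apply: le_measure; rewrite ?inE.
  - exact: measurableD (measurableC (mS t)) (mS (t + s)%R).
  - exact: measurableC (mS (t + s)%R).
  - by move=> x [].
have mB := measurableI _ _ (measurableC (mS t)) (mS (t + s)%R).
apply: le_trans (PXb_above_le n0 mB (@subIsetl _ _ _)) _.
apply: (@le_trans _ _
  ((expR (- (n%:R * t)))%:E * (expR (- (n%:R * (c - t))))%:E)).
  apply: lee_wpmul2l; first by rewrite lee_fin expR_ge0.
  apply: le_trans PX_ts; apply: le_measure; rewrite ?inE.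
  - exact: mB.
  - exact: mS.
  - by move=> x [].
by rewrite -EFinM -expRD lee_fin ler_expR; lra.
Unshelve. all: by end_near. Qed.

Lemma PXb_above_decays T s c : (0 < s)%R ->
  (forall t, (T <= t)%R -> (c - t)%:E < Defs.eta PX g (t + s)) ->
  decays_at_rate c (fun n => PXb n (~` llr_sublevel n T)).
Proof.
move=> s0 eta_gt.
suff grid k t : (T <= t)%R -> (c <= t + k%:R * s)%R ->
    decays_at_rate c (fun n => PXb n (~` llr_sublevel n t)).
  have [k _ kgt] := nbhs_infty_gtr ((c - T) / s).
  apply: (grid k T) => //; have := kgt k (leqnn k).
  by rewrite ltr_pdivrMr // => ?; lra.
elim: k t => [|k IHk] t Tt ctk.
  by apply: PXb_above_decays_large; rewrite mul0r addr0 in ctk.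
apply: PXb_above_decays_step (ltW s0) (eta_gt t Tt) _.
by apply: IHk; rewrite -?[k.+1]addn1 ?natrD ?mulrDl ?mul1r in ctk *; lra.
Qed.

Lemma r_achievable_direct {r E E1} : (E < E1)%R ->
  (forall t, Defs.eta PX g t < r%:E -> E1%:E <= t%:E + Defs.eta PX g t) ->
  r_achievable PX PXb r E.
Proof.
move=> EE1 E1_le.
pose T := (E1 - r)%R.
have E1_le_above t : (T <= t)%R -> E1%:E <= t%:E + Defs.eta PX g t.
  move=> Tt; have [/E1_le //|r_eta] := ltP (Defs.eta PX g t) r%:E.
  by rewrite -(subrK r E1) EFinD; apply: leeD; rewrite ?lee_fin.
have eta_T : r%:E <= Defs.eta PX g T.
  by have := E1_le_above T (lexx T); rewrite -{1}(subrK r E1) EFinD leeD2lE.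
pose s := ((E1 - E) / 3)%R.
exists (fun n => ~` llr_sublevel n T); split; [|split].
- by move=> n; apply: measurableC; exact: measurable_llr_sublevel.
- by under eq_fun do rewrite setCK; exact: eta_T.
apply: (@decays_at_rate_liminf _ (E + s)%R); first by rewrite /s; lra.
apply: (@PXb_above_decays _ s); first by rewrite /s; lra.
move=> t Tt; rewrite -(lteD2lE (x := (t + s)%:E)) //.
have Tts : (T <= t + s)%R by rewrite /s; lra.
apply: lt_le_trans (E1_le_above _ Tts).
by rewrite -EFinD lte_fin /s; lra.
Qed.

End sublevels.

Theorem theorem2p1 (d : measure_display) (R : realType) (X : measurableType d)
  (PX PXb : forall n : nat, probability (n.-tuple X) R)
  (g : forall n : nat, n.-tuple X -> \bar R) :
  (forall n, RN_version (PX n) (PXb n) (g n)) ->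
  (forall r : R, (0 <= r)%R -> Be PX PXb r = eta_inf PX g r) /\
  Be PX PXb 0%R = +oo.
Proof.
move=> RN.
have Be_eta_inf r : Be PX PXb r = eta_inf PX g r.
  apply/eqP; rewrite eq_le; apply/andP; split.
    apply: ge_ereal_sup => _ [E /= achE <-].
    apply: le_ereal_inf_tmp => _ [t /= eta_r <-].
    exact (r_achievable_converse RN achE eta_r).
  rewrite leNgt; apply/negP => /ereal_between_real [E /andP[BeE Eeta]].
  have [E1 /andP[EE1 E1eta]] := ereal_between_real Eeta.
  have achE : r_achievable PX PXb r E.
    have EE1R : (E < E1)%R by rewrite -lte_fin.
    apply: (r_achievable_direct RN EE1R).
    move=> t eta_r; apply: le_trans (ltW E1eta) _.
    by apply: ereal_inf_lbound; exists t.
  by move: BeE; rewrite ltNge ereal_sup_ubound //; exists E.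
split=> [r _|]; first exact: Be_eta_inf.
rewrite Be_eta_inf /eta_inf (_ : [set _ | _ in _] = set0) ?ereal_inf0 //.
apply/seteqP; split => [_ [t /= eta_neg _]|//].
by move: eta_neg; rewrite ltNge (eta_ge0 RN).
Qed.
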